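(* Let $\theta_i\in(0,2)$, $\alpha_i>0$, $\gamma_i>0$ and $0<\gamma_i\beta<1/\lambda_{\max}(L)$ for all $i=1,\dots,m$. Then the matrices $\mathbf H=QM^{-1}$ and $\mathbf D=Q^\top+Q-M^\top\mathbf HM$ satisfy $\mathbf H\succcurlyeq\mathbf D\succ0$.
   Context: Let $m\ge2$, $n_1,\dots,n_m\ge1$, $p,q\ge0$ integers, $n=\sum_in_i$. $L\in\mathbb R^{m\times m}$ satisfies $L=U^\top U$ with $U\in\mathbb R^{r\times m}$ of full row rank and $U\mathbf 1_m=0$ (and $L$ is compatible with a connected undirected graph on $m$ nodes, with $\mathrm{null}(L)=\mathrm{span}\{\mathbf 1_m\}$). $\mathbf U=U\otimes I_{p+q}$. Parameters $\theta_i,\alpha_i,\gamma_i>0$, $\beta>0$; $\Theta=\mathrm{diag}(\theta_1I_{n_1},\dots,\theta_mI_{n_m})$, $\Upsilon=\mathrm{diag}(\alpha_1I_{n_1},\dots,\alpha_mI_{n_m})$, $\Gamma=\mathrm{diag}(\gamma_1I_{p+q},\dots,\gamma_mI_{p+q})$; $Q=\begin{pmatrix}\Upsilon^{-1}&0&0\\0&\Gamma^{-1}&-\mathbf U^\top\\0&0&\frac1\beta I_{r(p+q)}\end{pmatrix}$, $M=\begin{pmatrix}\Theta&0&0\\0&I_{m(p+q)}&-\Gamma\mathbf U^\top\\0&0&I_{r(p+q)}\end{pmatrix}$. $A\succcurlyeq B$ means $A-B$ is symmetric positive semidefinite; $\succ0$ means symmetric positive definite. *)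

From HB Require Import structures.
From mathcomp Require Import all_boot all_order all_algebra.
From mathcomp Require Import mxtens.
Set Implicit Arguments. Unset Strict Implicit. Unset Printing Implicit Defensive.
Import Order.TTheory GRing.Theory Num.Theory.
Local Open Scope ring_scope.

Definition psd (R : realFieldType) (N : nat) (A : 'M[R]_N) : Prop :=
  A^T = A /\ forall x : 'cV[R]_N, 0 <= (x^T *m A *m x) 0 0.

Definition pd (R : realFieldType) (N : nat) (A : 'M[R]_N) : Prop :=
  A^T = A /\ forall x : 'cV[R]_N, x != 0 -> 0 < (x^T *m A *m x) 0 0.

Definition is_lambda_max (R : realFieldType) (N : nat) (A : 'M[R]_N) (l : R) : Prop :=
  eigenvalue A l /\ forall a : R, eigenvalue A a -> a <= l.

Definition compatible_graph (R : pzRingType) (m : nat) (L : 'M[R]_m) (e : rel 'I_m) : Prop :=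
  symmetric e /\ irreflexive e /\ (forall i j, i != j -> ~~ e i j -> L i j = 0).

Definition connected_graph (m : nat) (e : rel 'I_m) : Prop :=
  forall i j, connect e i j.

(* Q and M are block diagonal, with a primal block (Ups^-1, Theta) and a dual
   block, so H and D are block diagonal as well and each block can be treated
   on its own.  On the primal block everything is diagonal, with
   H - D = Ups^-1 Theta^-1 (1 - Theta)^2 and D = Ups^-1 (2 - Theta).  On the
   dual block M is unipotent, H = diag(Gam^-1, 1/beta) and
   D = diag(Gam^-1, 1/beta - Ub Gam Ub^T), so H - D = diag(0, Ub Gam Ub^T).
   Finally 1/beta - Ub Gam Ub^T is positive definite since
   Ub Gam Ub^T <= gamma_max Ub Ub^T <= gamma_max lambda_max(L) < 1/beta: the
   nonzero eigenvalues of Ub Ub^T are those of Ub^T Ub = L (x) I, that is of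
   L, and the Rayleigh bound for a real symmetric matrix comes from the
   complex spectral theorem. *)

From HB Require Import structures.
From mathcomp Require Import all_boot all_order all_algebra.
From mathcomp Require Import mxtens.
From mathcomp Require Import complex spectral sesquilinear.
From mathcomp Require Import ring.
Set Implicit Arguments. Unset Strict Implicit. Unset Printing Implicit Defensive.
Import Order.TTheory GRing.Theory Num.Theory.
Local Open Scope ring_scope.

Section PosDef.
Variable R : realFieldType.

Lemma pd_psd n (A : 'M[R]_n) : pd A -> psd A.
Proof.
move=> [As Ap]; split=> // x; have [->|nz] := eqVneq x 0.
  by rewrite mulmx0 mxE.
exact/ltW/Ap.
Qed.

Lemma quad_block_diag n1 n2 (A : 'M[R]_n1) (B : 'M[R]_n2) (x : 'cV_(n1 + n2)) :
  (x^T *m block_mx A 0 0 B *m x) 0 0 =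
  ((usubmx x)^T *m A *m usubmx x) 0 0 + ((dsubmx x)^T *m B *m dsubmx x) 0 0.
Proof.
rewrite -{1 2}[x]vsubmxK tr_col_mx mul_row_block !mulmx0 addr0 add0r.
by rewrite mul_row_col mxE.
Qed.

Lemma psd_block_diag n1 n2 (A : 'M[R]_n1) (B : 'M[R]_n2) :
  psd A -> psd B -> psd (block_mx A 0 0 B).
Proof.
move=> [As Ap] [Bs Bp]; split; first by rewrite tr_block_mx As Bs !trmx0.
by move=> x; rewrite quad_block_diag addr_ge0.
Qed.

Lemma pd_block_diag n1 n2 (A : 'M[R]_n1) (B : 'M[R]_n2) :
  pd A -> pd B -> pd (block_mx A 0 0 B).
Proof.
move=> pdA pdB; have [As Ap] := pdA; have [Bs Bp] := pdB.
have [_ Ap0] := pd_psd pdA; have [_ Bp0] := pd_psd pdB.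
split; first by rewrite tr_block_mx As Bs !trmx0.
move=> x nz; rewrite quad_block_diag.
have [u0|unz] := eqVneq (usubmx x) 0; last by rewrite ltr_wpDr ?Ap.
rewrite ltr_wpDl // Bp //; apply: contraNneq nz => d0.
by rewrite -[x]vsubmxK u0 d0 col_mx0.
Qed.

Lemma quad_diag n (c : 'rV[R]_n) (x : 'cV_n) :
  (x^T *m diag_mx c *m x) 0 0 = \sum_k c 0 k * x k 0 ^+ 2.
Proof.
rewrite mxE; apply: eq_bigr => k _.
by rewrite mul_mx_diag !mxE mulrAC mulrC expr2 mulrA.
Qed.

Lemma quad_id n (x : 'cV[R]_n) : (x^T *m x) 0 0 = \sum_k x k 0 ^+ 2.
Proof. by rewrite mxE; apply: eq_bigr => k _; rewrite mxE expr2. Qed.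

Lemma psd_diag n (c : 'rV[R]_n) : (forall k, 0 <= c 0 k) -> psd (diag_mx c).
Proof.
move=> c_ge0; split=> [|x]; first exact: tr_diag_mx.
by rewrite quad_diag sumr_ge0 // => k _; rewrite mulr_ge0 ?sqr_ge0.
Qed.

Lemma pd_diag n (c : 'rV[R]_n) : (forall k, 0 < c 0 k) -> pd (diag_mx c).
Proof.
move=> c_gt0; split=> [|x /cV0Pn[k xk]]; first exact: tr_diag_mx.
have xk2 : 0 < x k 0 ^+ 2 by rewrite lt0r sqr_ge0 sqrf_eq0 xk.
rewrite quad_diag (bigD1 k) //= ltr_wpDr ?(mulr_gt0 (c_gt0 k) xk2) //.
by rewrite sumr_ge0 // => i _; rewrite mulr_ge0 ?sqr_ge0 ?ltW.
Qed.

Lemma quad_diag_le n (c : 'rV[R]_n) b (x : 'cV_n) :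
  (forall k, c 0 k <= b) -> (x^T *m diag_mx c *m x) 0 0 <= b * (x^T *m x) 0 0.
Proof.
move=> c_le; rewrite quad_diag quad_id mulr_sumr ler_sum // => k _.
by rewrite ler_wpM2r ?sqr_ge0.
Qed.

Lemma quad_gt0 n (x : 'cV[R]_n) : x != 0 -> 0 < (x^T *m x) 0 0.
Proof.
have [|_ /(_ x)] := @pd_diag n (const_mx 1); first by move=> k; rewrite mxE ltr01.
by rewrite diag_const_mx mulmx1.
Qed.

Lemma pd_unitmx n (A : 'M[R]_n) : pd A -> A \in unitmx.
Proof.
move=> [_ Ap]; apply: contraT => nuA.
have /eigenvalueP[v vA nz] : eigenvalue A 0.
  by rewrite /eigenvalue /eigenspace raddf0 subr0 kermx_eq0 row_free_unit.
have vT : v^T != 0 by rewrite -trmx0 (inj_eq trmx_inj).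
by have := Ap _ vT; rewrite trmxK vA scale0r mul0mx mxE ltxx.
Qed.

Lemma pd_invmx n (A : 'M[R]_n) : pd A -> pd (invmx A).
Proof.
move=> pdA; have uA := pd_unitmx pdA; have [As Ap] := pdA.
split=> [|x nz]; first by rewrite trmx_inv As.
have -> : x = A *m (invmx A *m x) by rewrite mulKVmx.
rewrite trmx_mul As -!mulmxA mulKmx // mulmxA Ap //.
by apply: contraNneq nz => y0; rewrite -[x](mulKVmx uA) y0 mulmx0.
Qed.

Lemma psd_congr m n (G : 'M[R]_n) (B : 'M[R]_(m, n)) :
  psd G -> psd (B *m G *m B^T).
Proof.
move=> [Gs Gp]; split=> [|x]; first by rewrite !trmx_mul trmxK Gs mulmxA.
by have := Gp (B^T *m x); rewrite trmx_mul trmxK !mulmxA.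
Qed.

Lemma pd_scalar_sub n (A : 'M[R]_n) c :
  A^T = A -> (forall x : 'cV_n, x != 0 -> (x^T *m A *m x) 0 0 < c * (x^T *m x) 0 0) ->
  pd (c%:M - A).
Proof.
move=> As Alt; split=> [|x nz]; first by rewrite linearB /= tr_scalar_mx As.
rewrite mulmxBr mulmxBl mul_mx_scalar -scalemxAl.
move: (Alt x nz); set xAx := x^T *m A *m x; set xx := x^T *m x.
by rewrite !mxE subr_gt0.
Qed.

End PosDef.

Section HDCondition.
Variable R : realFieldType.

Definition Hmx n (Q M : 'M[R]_n) := Q *m invmx M.
Definition Dmx n (Q M : 'M[R]_n) := Q^T + Q - M^T *m Hmx Q M *m M.
Definition HD_condition n (Q M : 'M[R]_n) := psd (Hmx Q M - Dmx Q M) /\ pd (Dmx Q M).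

Lemma DmxE n (Q M : 'M[R]_n) : M \in unitmx -> Dmx Q M = Q^T + Q - M^T *m Q.
Proof. by move=> uM; rewrite /Dmx /Hmx -mulmxA mulmxKV. Qed.

Lemma HD_condition_block_diag n1 n2 (Q1 M1 : 'M[R]_n1) (Q2 M2 : 'M[R]_n2) :
  M1 \in unitmx -> M2 \in unitmx ->
  HD_condition Q1 M1 -> HD_condition Q2 M2 ->
  HD_condition (block_mx Q1 0 0 Q2) (block_mx M1 0 0 M2).
Proof.
move=> uM1 uM2 [HD1 D1] [HD2 D2].
have uM : block_mx M1 0 0 M2 \in unitmx by rewrite block_diag_mx_unit uM1.
have eH : Hmx (block_mx Q1 0 0 Q2) (block_mx M1 0 0 M2) =
          block_mx (Hmx Q1 M1) 0 0 (Hmx Q2 M2).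
  by rewrite /Hmx invmx_block_diag // mulmx_block !(mulmx0, mul0mx, addr0, add0r).
have eD : Dmx (block_mx Q1 0 0 Q2) (block_mx M1 0 0 M2) =
          block_mx (Dmx Q1 M1) 0 0 (Dmx Q2 M2).
  rewrite !DmxE // !tr_block_mx !trmx0 mulmx_block !(mulmx0, mul0mx, addr0, add0r).
  by rewrite !add_block_mx !opp_block_mx !add_block_mx !(addr0, oppr0).
rewrite /HD_condition eH eD opp_block_mx add_block_mx !(addr0, oppr0).
by split; [apply: psd_block_diag | apply: pd_block_diag].
Qed.

Lemma mulmx1_invmx n (A B : 'M[R]_n) : A *m B = 1%:M -> invmx A = B.
Proof.
by move=> AB1; have [uA _] := mulmx1_unit AB1; rewrite -[LHS]mulmx1 -AB1 mulKmx.
Qed.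

Lemma unitmx_diag n (d : 'rV[R]_n) : (forall k, d 0 k != 0) -> diag_mx d \in unitmx.
Proof. by move=> d_neq0; rewrite unitmxE det_diag unitfE; apply/prodf_neq0. Qed.

Lemma invmx_diag n (d : 'rV[R]_n) :
  (forall k, d 0 k != 0) -> invmx (diag_mx d) = diag_mx (\row_k (d 0 k)^-1).
Proof.
move=> d_neq0; apply: mulmx1_invmx.
rewrite mulmx_diag -diag_const_mx; congr diag_mx.
by apply/rowP => k; rewrite !mxE divff.
Qed.

Lemma HD_condition_diag n (a t : 'rV[R]_n) :
  (forall k, 0 < a 0 k) -> (forall k, 0 < t 0 k < 2) ->
  HD_condition (invmx (diag_mx a)) (diag_mx t).
Proof.
move=> a_gt0 t_in; have t_gt0 k : 0 < t 0 k by case/andP: (t_in k).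
have a_neq0 k : a 0 k != 0 by rewrite gt_eqF.
have t_neq0 k : t 0 k != 0 by rewrite gt_eqF.
rewrite /HD_condition DmxE ?unitmx_diag // /Hmx !invmx_diag //.
rewrite !tr_diag_mx !mulmx_diag -!raddfD -!raddfB /=.
split; [apply: psd_diag | apply: pd_diag] => k; rewrite !mxE.
- have -> : (a 0 k)^-1 * (t 0 k)^-1 - ((a 0 k)^-1 + (a 0 k)^-1 - t 0 k * (a 0 k)^-1)
    = (a 0 k * t 0 k)^-1 * (1 - t 0 k) ^+ 2.
    by field; rewrite !gt_eqF.
  by rewrite mulr_ge0 ?sqr_ge0 // invr_ge0 ltW ?mulr_gt0.
- have -> : (a 0 k)^-1 + (a 0 k)^-1 - t 0 k * (a 0 k)^-1 = (a 0 k)^-1 * (2 - t 0 k).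
    by ring.
  by case/andP: (t_in k) => _ t_lt2; rewrite mulr_gt0 ?invr_gt0 ?subr_gt0.
Qed.

Lemma unitmx_ublock1 n1 n2 (X : 'M[R]_(n1, n2)) : block_mx 1%:M X 0 1%:M \in unitmx.
Proof. by rewrite unitmxE det_ublock !det1 mulr1 unitr1. Qed.

Lemma invmx_ublock1 n1 n2 (X : 'M[R]_(n1, n2)) :
  invmx (block_mx 1%:M X 0 1%:M) = block_mx 1%:M (- X) 0 1%:M.
Proof.
apply: mulmx1_invmx.
rewrite mulmx_block !(mulmx0, mul0mx, mulmx1, mul1mx, addr0, add0r, subrr, addNr).
by rewrite -scalar_mx_block.
Qed.

Lemma HD_condition_ublock n k (G : 'M[R]_n) (B : 'M[R]_(k, n)) c :
  pd G -> pd (c%:M - B *m G *m B^T) ->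
  HD_condition (block_mx (invmx G) (- B^T) 0 c%:M)
               (block_mx 1%:M (- (G *m B^T)) 0 1%:M).
Proof.
move=> pdG pdS; have [Gs _] := pdG; have uG := pd_unitmx pdG.
set Q := block_mx _ _ _ _; set M := block_mx _ _ _ _.
have eH : Hmx Q M = block_mx (invmx G) 0 0 c%:M.
  rewrite /Hmx invmx_ublock1 opprK mulmx_block !(mulmx0, mul0mx, mulmx1, addr0, add0r).
  by rewrite mulmxA mulVmx // mul1mx subrr.
have eD : Dmx Q M = block_mx (invmx G) 0 0 (c%:M - B *m G *m B^T).
  rewrite DmxE ?unitmx_ublock1 // !tr_block_mx trmx_inv Gs !trmx0 !linearN /=.
  rewrite trmx_mul Gs trmxK tr_scalar_mx trmx1 mulmx_block.
  rewrite !(mulmx0, mul0mx, mulmx1, mul1mx, addr0, add0r).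
  rewrite !add_block_mx opp_block_mx add_block_mx.
  rewrite addrK sub0r opprK addNr addr0 !mulNmx mulmxN !opprK -(mulmxA B G (invmx G)).
  by rewrite mulmxV // mulmx1 addNr trmx1 mul1mx (addrC (B *m G *m B^T)) addrKA.
rewrite /HD_condition eH eD opp_block_mx add_block_mx !oppr0 !subrr !addr0 subKr.
split; last by apply: pd_block_diag => //; apply: pd_invmx.
apply: psd_block_diag; last exact/psd_congr/pd_psd.
by rewrite -(raddf0 (@diag_mx _ n)); apply: psd_diag => i; rewrite mxE.
Qed.

End HDCondition.

Section Spectral.
Variable C : numClosedFieldType.
Local Open Scope sesquilinear_scope.

Lemma spectral_diag_eigenvalue n (A : 'M[C]_n) i :
  A \is normalmx -> eigenvalue A (spectral_diag A 0 i).
Proof.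
move=> /orthomx_spectralP AE; have uP := spectral_unit A.
apply/eigenvalueP; exists (row i (spectralmx A)).
  rewrite {2}AE -row_mul !mulmxA mulmxV // mul1mx row_mul row_diag_mx.
  by rewrite -scalemxAl -rowE.
apply: contraTneq uP => Pi0; rewrite -row_free_unit -kermx_eq0.
apply/rowV0Pn; exists (delta_mx 0 i); last first.
  by apply/negP => /eqP/matrixP/(_ 0 i); rewrite !mxE !eqxx; apply/eqP/oner_neq0.
by apply/sub_kermxP; rewrite -rowE.
Qed.

Lemma quad_diag_rV n (d y : 'rV[C]_n) :
  (y *m diag_mx d *m y^t*) 0 0 = \sum_k d 0 k * (y 0 k * (y 0 k)^*).
Proof.
rewrite mxE; apply: eq_bigr => k _.
by rewrite mul_mx_diag !mxE mulrAC mulrC mulrA.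
Qed.

Lemma hermitian_quad_le n (A : 'M[C]_n) l (u : 'rV_n) :
  A \is hermsymmx -> (forall k, spectral_diag A 0 k <= l) ->
  (u *m A *m u^t*) 0 0 <= l * (u *m u^t*) 0 0.
Proof.
move=> /hermitian_normalmx /orthomx_spectralP AE d_le.
have Pu := spectral_unitarymx A; rewrite invmx_unitary // in AE.
pose y := u *m (spectralmx A)^t*.
have yC : y^t* = spectralmx A *m u^t*.
  by rewrite /y trmx_mul map_mxM trmxCK.
have yy : (y *m y^t*) = u *m u^t*.
  by rewrite yC /y mulmxA mulmxKtV.
have yAy : u *m A *m u^t* = y *m diag_mx (spectral_diag A) *m y^t*.
  by rewrite yC {1}AE /y !mulmxA.
rewrite yAy -yy.
rewrite quad_diag_rV [X in l * X]mxE mulr_sumr; apply: ler_sum => k _.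
by rewrite !mxE ler_wpM2r ?mul_conjC_ge0.
Qed.

End Spectral.

Section Rayleigh.
Variable R : rcfType.
Local Notation f := (real_complex R).

Lemma map_real_conj m n (M : 'M[R]_(m, n)) : map_mx Num.conj (map_mx f M) = map_mx f M.
Proof. by apply/matrixP => i j; rewrite !mxE; apply/CrealP; rewrite complex_real. Qed.

Lemma rayleigh_le n (A : 'M[R]_n) l (x : 'cV_n) :
  A^T = A -> (forall a, eigenvalue A a -> a <= l) ->
  (x^T *m A *m x) 0 0 <= l * (x^T *m x) 0 0.
Proof.
move=> As A_le; have Ah : map_mx f A \is hermsymmx.
  apply: realsym_hermsym; last by apply/mxOverP => i j; rewrite mxE complex_real.
  by apply/is_hermitianmxP; rewrite expr0 scale1r map_mx_id // map_trmx As.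
(* The spectral values of A over R[i] are real, hence real eigenvalues of A. *)
have d_le k : spectral_diag (map_mx f A) 0 k <= f l.
  have /complex_realP[a ak] := mxOverP (hermitian_spectral_diag_real Ah) 0 k.
  rewrite ak -[f l]/(l%:C)%C lecR A_le // -(eigenvalue_map f).
  by have := spectral_diag_eigenvalue k (hermitian_normalmx Ah); rewrite ak.
have := hermitian_quad_le (map_mx f x^T) Ah d_le.
by rewrite map_trmx trmxK map_real_conj -!map_mxM !mxE -rmorphM lecR.
Qed.

End Rayleigh.

Lemma tensmxBl (R : pzRingType) m n p q (A B : 'M[R]_(m, n)) (C : 'M[R]_(p, q)) :
  (A - B) *t C = A *t C - B *t C.
Proof. by apply/matrixP => i j; rewrite !mxE mulrBl. Qed.

Lemma diag_tensmx1 (R : pzRingType) m k (c : 'rV[R]_m) :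
  diag_mx c *t (1%:M : 'M_k) = diag_mx (\row_t c 0 (mxtens_unindex t).1).
Proof.
apply/matrixP => i j; case: (mxtens_indexP i) => i1 i2; case: (mxtens_indexP j) => j1 j2.
rewrite !mxE !mxtens_indexK (can_eq (@mxtens_indexK m k)) xpair_eqE.
by case: (i1 == j1); case: (i2 == j2); rewrite ?mulr1n ?mulr0n ?mulr1 ?mulr0.
Qed.

Section Eigenvalues.
Variable F : fieldType.

Lemma eigenvalue_mulmxC m n (A : 'M[F]_(m, n)) (B : 'M_(n, m)) a :
  a != 0 -> eigenvalue (A *m B) a -> eigenvalue (B *m A) a.
Proof.
move=> a_neq0 /eigenvalueP[v vAB v_neq0]; apply/eigenvalueP; exists (v *m A).
  by rewrite mulmxA -(mulmxA v) vAB -scalemxAl.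
move: v_neq0; apply: contraNneq => vA0.
have /eqP : a *: v = 0 by rewrite -vAB mulmxA vA0 mul0mx.
by rewrite scaler_eq0 (negbTE a_neq0).
Qed.

Lemma eigenvalue_tensmx1 m k (A : 'M[F]_m) a :
  eigenvalue (A *t (1%:M : 'M_k)) a -> eigenvalue A a.
Proof.
(* [tensmx_unit] needs nonzero dimensions, which an eigenvector provides. *)
move=> eigAa; have /eigenvalueP[v _ /rV0Pn[j _]] := eigAa.
have /andP[m_gt0 k_gt0] : (0 < m)%N && (0 < k)%N.
  by rewrite -muln_gt0 (leq_ltn_trans _ (ltn_ord j)).
move: eigAa; apply: contraLR; rewrite /eigenvalue /eigenspace !negbK !kermx_eq0 !row_free_unit.
have -> : A *t 1%:M - a%:M = (A - a%:M) *t (1%:M : 'M_k).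
  rewrite tensmxBl -(diag_const_mx m a) diag_tensmx1; congr (_ - _).
  by rewrite -diag_const_mx; congr diag_mx; apply/rowP => t; rewrite !mxE.
by move=> uA; rewrite tensmx_unit ?unitmx1 -?lt0n.
Qed.

End Eigenvalues.

Lemma gram_tensmx1_quad_le (R : rcfType) r m k (U : 'M[R]_(r, m)) l (x : 'cV_(r * k)) :
  0 <= l -> (forall a, eigenvalue (U^T *m U) a -> a <= l) ->
  (x^T *m ((U *t (1%:M : 'M_k)) *m (U *t 1%:M)^T) *m x) 0 0 <= l * (x^T *m x) 0 0.
Proof.
move=> l_ge0 L_le; apply: rayleigh_le => [|a]; first by rewrite trmx_mul trmxK.
have [-> //|a_neq0 /(eigenvalue_mulmxC a_neq0)] := eqVneq a 0.
by rewrite trmx_tens tensmx_mul tr_scalar_mx mulmx1 => /eigenvalue_tensmx1; apply: L_le.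
Qed.

Lemma pd_sub_gram_tensmx1 (R : rcfType) r m k (U : 'M[R]_(r, m)) (g : 'rV[R]_(m * k)) b l c :
  0 <= l -> (forall a, eigenvalue (U^T *m U) a -> a <= l) ->
  0 <= b -> (forall t, g 0 t <= b) -> b * l < c ->
  pd (c%:M - (U *t (1%:M : 'M_k)) *m diag_mx g *m (U *t 1%:M)^T).
Proof.
move=> l_ge0 L_le b_ge0 g_le blc; set Ub := U *t 1%:M.
apply: pd_scalar_sub => [|x x_neq0]; first by rewrite !trmx_mul trmxK tr_diag_mx mulmxA.
pose z := Ub^T *m x.
have zGz : x^T *m (Ub *m diag_mx g *m Ub^T) *m x = z^T *m diag_mx g *m z.
  by rewrite /z trmx_mul trmxK !mulmxA.
have zz : z^T *m z = x^T *m (Ub *m Ub^T) *m x by rewrite /z trmx_mul trmxK !mulmxA.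
rewrite zGz; apply: le_lt_trans (quad_diag_le z g_le) _.
rewrite zz; apply: le_lt_trans (ler_wpM2l b_ge0 (gram_tensmx1_quad_le x l_ge0 L_le)) _.
by rewrite mulrA ltr_pM2r // quad_gt0.
Qed.

Lemma mxdiag_scalar (R : pzRingType) m (nn : 'I_m -> nat) (c : 'I_m -> R) :
  \mxdiag_(i < m) ((c i)%:M : 'M[R]_(nn i)) = diag_mx (\row_k c (tagnat.sig1 k)).
Proof.
under eq_mxdiag do rewrite -diag_const_mx.
by rewrite -diag_mxrow; congr diag_mx; apply/rowP => k; rewrite !mxE.
Qed.

Theorem proposition2 (R : rcfType) (m : nat) (nn : 'I_m -> nat) (p q r : nat)
  (L : 'M[R]_m) (U : 'M[R]_(r, m)) (e : rel 'I_m)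
  (theta alpha gamma : 'I_m -> R) (beta lmax : R) :
  (2 <= m)%N ->
  (forall i, 1 <= nn i)%N ->
  L = U^T *m U ->
  row_free U ->
  U *m (const_mx 1 : 'cV[R]_m) = 0 ->
  @compatible_graph R m L e -> connected_graph e ->
  (forall x : 'cV[R]_m, L *m x = 0 <-> exists c : R, x = c *: const_mx 1) ->
  is_lambda_max L lmax ->
  (forall i, 0 < theta i < 2) ->
  (forall i, 0 < alpha i) ->
  (forall i, 0 < gamma i) ->
  0 < beta ->
  (forall i, 0 < gamma i * beta < lmax^-1) ->
  let Theta : 'M[R]_(\sum_(i < m) nn i) := \mxdiag_(i < m) ((theta i)%:M : 'M[R]_(nn i)) in
  let Ups : 'M[R]_(\sum_(i < m) nn i) := \mxdiag_(i < m) ((alpha i)%:M : 'M[R]_(nn i)) in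
  let Gam : 'M[R]_(m * (p + q)) :=
    diag_mx (\row_i gamma i) *t (1%:M : 'M[R]_(p + q)) in
  let Ub : 'M[R]_(r * (p + q), m * (p + q)) := U *t (1%:M : 'M[R]_(p + q)) in
  let Q : 'M[R]_(\sum_(i < m) nn i + (m * (p + q) + r * (p + q))) :=
    block_mx (invmx Ups) 0 0
             (block_mx (invmx Gam) (- Ub^T) 0 (beta^-1)%:M) in
  let M : 'M[R]_(\sum_(i < m) nn i + (m * (p + q) + r * (p + q))) :=
    block_mx Theta 0 0
             (block_mx 1%:M (- (Gam *m Ub^T)) 0 1%:M) in
  let H := Q *m invmx M in
  let D := Q^T + Q - M^T *m H *m M in
  psd (H - D) /\ pd D.
Proof.
(* Of the assumptions on L only L = U^T U and the bound on its eigenvalues matter. *)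
move=> m_ge2 _ LE _ _ _ _ _ [_ L_le] theta_in alpha_gt0 gamma_gt0 beta_gt0 gamma_beta_lt.
move=> Theta Ups Gam Ub Q M H D.
have i0 : 'I_m by exists 0%N; apply: leq_trans m_ge2.
have lmax_gt0 : 0 < lmax.
  by case/andP: (gamma_beta_lt i0) => gb_gt0 /(lt_trans gb_gt0); rewrite invr_gt0.
have GamE : Gam = diag_mx (\row_t gamma (mxtens_unindex t).1).
  by rewrite /Gam diag_tensmx1; congr diag_mx; apply/rowP => t; rewrite !mxE.
have [istar _ gamma_le] := @arg_maxP _ _ _ i0 xpredT gamma isT.
have gamma_lmax_lt : gamma istar * lmax < beta^-1.
  have /andP[_ gb_lt] := gamma_beta_lt istar.
  rewrite -(ltr_pM2r beta_gt0) mulVf ?gt_eqF // mulrAC.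
  by rewrite -(mulVf (lt0r_neq0 lmax_gt0)) ltr_pM2r.
have slack : pd ((beta^-1)%:M - Ub *m Gam *m Ub^T).
  rewrite GamE; apply: pd_sub_gram_tensmx1 gamma_lmax_lt; rewrite ?ltW -?LE //.
  by move=> t; rewrite mxE; apply: gamma_le.
suff : HD_condition Q M by [].
rewrite /Q /M /Theta /Ups !mxdiag_scalar; apply: HD_condition_block_diag.
- by apply: unitmx_diag => k; rewrite mxE; case/andP: (theta_in (tagnat.sig1 k)) => /gt_eqF ->.
- exact: unitmx_ublock1.
- by apply: HD_condition_diag => k; rewrite mxE.
- by apply: HD_condition_ublock; rewrite // GamE; apply: pd_diag => t; rewrite mxE.
Qed.
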